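(* (i) A legal abstract path has weight $2$ if and only if it has the form Ia or the form Ib, where: form Ia means it consists of exactly two nodes, both interior, joined by one arrow; form Ib means it has exactly one boundary node $v$ and every other node is an interior node adjacent to $v$. (ii) A boundary abstract path has length $2$ if and only if it has the form II, i.e. consists of exactly two boundary nodes joined by one arrow.
   Context: $\mathbb F=\{0,1\}$, $\mathbb N=\{0,1,2,\dots\}$. Abstract vertex types: $o$ (interior), $u$ (unstable), $s$ (stable). An abstract edge is $\varepsilon=(\mu,(o_1,u_1,s_1),(o_2,u_2,s_2))\in\mathbb F\times\mathbb N^3\times\mathbb N^3$ with: if $\mu=0$ then $s_1=u_2=0$; if $\mu=1$ then $o_1=o_2=0$ (interior if $\mu=0$, boundary if $\mu=1$). Weight: $w(\varepsilon)=1$ if $\mu=0$, $2-s_1-u_2$ if $\mu=1$. An abstract path $\tau=(T,\tau,\sigma)$: a non-empty finite directed tree $T=(V,E)$ (nodes, arrows), $\tau:V\to$ abstract edges, $\sigma:E\to\{o,u,s\}$, such that for each node $v$ and type $X$, $X_1(v)\ge|\{e:t(e)=v,\sigma(e)=X\}|$ and $X_2(v)\ge|\{e:s(e)=v,\sigma(e)=X\}|$, with $X_i(v)$ the entries of $\tau(v)$. Ends: $X_1(\tau)=\sum_vX_1(v)-|\sigma^{-1}(X)|$, $X_2(\tau)=\sum_vX_2(v)-|\sigma^{-1}(X)|$. A node is interior or boundary according to $\mu(v)$. $\tau$ is legal if $s_1(\tau)=u_2(\tau)=0$; it is a boundary path if all nodes are boundary. Length = number of nodes; weight $w(\tau)=\sum_vw(\tau(v))$.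 *)

From HB Require Import structures.
From mathcomp Require Import all_boot all_order all_algebra.
Set Implicit Arguments. Unset Strict Implicit. Unset Printing Implicit Defensive.
Import GRing.Theory Num.Theory.

(* Abstract vertex types: o (interior), u (unstable), s (stable). *)
Inductive vtype := tO | tU | tS.

Definition vtype_to_nat (X : vtype) : nat :=
  match X with tO => 0 | tU => 1 | tS => 2 end.
Definition nat_to_vtype (n : nat) : option vtype :=
  match n with 0 => Some tO | 1 => Some tU | 2 => Some tS | _ => None end.
Lemma vtype_natK : pcancel vtype_to_nat nat_to_vtype.
Proof. by case. Qed.
HB.instance Definition _ := Countable.copy vtype (pcan_type vtype_natK).

(* An (candidate) abstract edge (mu, (o1,u1,s1), (o2,u2,s2)); mu = false
   encodes 0 (interior), mu = true encodes 1 (boundary). *)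
Record aedge := AEdge {
  ae_mu : bool;
  ae_o1 : nat; ae_u1 : nat; ae_s1 : nat;
  ae_o2 : nat; ae_u2 : nat; ae_s2 : nat }.

Definition is_aedge (a : aedge) : bool :=
  if ae_mu a then (ae_o1 a == 0) && (ae_o2 a == 0)
  else (ae_s1 a == 0) && (ae_u2 a == 0).

Definition X1 (X : vtype) (a : aedge) : nat :=
  match X with tO => ae_o1 a | tU => ae_u1 a | tS => ae_s1 a end.
Definition X2 (X : vtype) (a : aedge) : nat :=
  match X with tO => ae_o2 a | tU => ae_u2 a | tS => ae_s2 a end.

Definition aedge_weight (a : aedge) : int :=
  if ae_mu a then (2%:Z - (ae_s1 a)%:Z - (ae_u2 a)%:Z)%R else 1%R.

Section Paths.
Variables (V E : finType) (src tgt : E -> V).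

Definition adjacent (x y : V) : bool :=
  [exists e, ((src e == x) && (tgt e == y)) || ((src e == y) && (tgt e == x))].

Fixpoint walk_end (x : V) (es : seq E) : option V :=
  match es with
  | [::] => Some x
  | e :: es' =>
      if src e == x then walk_end (tgt e) es'
      else if tgt e == x then walk_end (src e) es'
      else None
  end.

Definition acyclic : Prop :=
  forall (x : V) (es : seq E), es != [::] -> uniq es -> walk_end x es <> Some x.

Definition uconnected : Prop := forall x y : V, connect adjacent x y.

Definition is_dtree : Prop := 0 < #|V| /\ uconnected /\ acyclic.

Variables (tau : V -> aedge) (sigma : E -> vtype).

Definition is_abstract_path : Prop :=
  [/\ is_dtree,
      (forall v, is_aedge (tau v)),
      (forall v X, #|[set e | (tgt e == v) && (sigma e == X)]| <= X1 X (tau v)) &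
      (forall v X, #|[set e | (src e == v) && (sigma e == X)]| <= X2 X (tau v))].

Definition ends1 (X : vtype) : int :=
  ((\sum_v (X1 X (tau v))%:Z) - (#|[set e | sigma e == X]|)%:Z)%R.
Definition ends2 (X : vtype) : int :=
  ((\sum_v (X2 X (tau v))%:Z) - (#|[set e | sigma e == X]|)%:Z)%R.

Definition is_legal : Prop := ends1 tS = 0%R /\ ends2 tU = 0%R.

Definition is_boundary_path : Prop := forall v, ae_mu (tau v).

Definition path_length : nat := #|V|.

Definition path_weight : int := (\sum_v aedge_weight (tau v))%R.

Definition formIa : Prop :=
  exists (x y : V) (e : E),
    [/\ x != y, (forall v, v = x \/ v = y), (forall e', e' = e),
        src e = x /\ tgt e = y &
        ~~ ae_mu (tau x) /\ ~~ ae_mu (tau y)].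

Definition formIb : Prop :=
  exists v : V, ae_mu (tau v) /\
    (forall w, w != v -> ~~ ae_mu (tau w) /\
       exists e, (src e = v /\ tgt e = w) \/ (src e = w /\ tgt e = v)).

Definition formII : Prop :=
  exists (x y : V) (e : E),
    [/\ x != y, (forall v, v = x \/ v = y), (forall e', e' = e),
        src e = x /\ tgt e = y &
        ae_mu (tau x) /\ ae_mu (tau y)].

End Paths.

(* A legal path has weight |V| + |B| - |U|, where B is the set of boundary
   nodes and U the set of arrows of type u or s: a node contributes
   1 + mu - s1 - u2, and legality says that the entries s1 and u2 are used up
   exactly by the arrows of type s and u.  An arrow of type u (resp. s) leaves
   (resp. enters) a boundary node, and the underlying graph is a tree, so
   |U| <= |E| < |V|.  Weight 2 therefore forces |B| <= 1: without boundary
   nodes there are no u/s-arrows and |V| = 2 (form Ia); with a single boundary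
   node v all arrows have type u or s, hence meet v (form Ib).  Conversely,
   the same count gives weight 2 for both forms.  Part (ii) is the fact that
   a tree with two nodes has exactly one arrow. *)

From mathcomp Require Import all_boot all_order all_algebra zify.
Set Implicit Arguments. Unset Strict Implicit. Unset Printing Implicit Defensive.
Import GRing.Theory.

Section Forest.
Variables (V E : finType) (src tgt : E -> V).

Definition incident (e : E) (y : V) := (src e == y) || (tgt e == y).

Definition other_end (e : E) (y : V) := if src e == y then tgt e else src e.

Lemma walk_end_cat x es1 es2 :
  walk_end src tgt x (es1 ++ es2) =
  obind (walk_end src tgt ^~ es2) (walk_end src tgt x es1).
Proof. by elim: es1 x => [|e es IH] x //=; case: ifP => _; [|case: ifP]. Qed.

Lemma walk_end1_incident x e y : walk_end src tgt x [:: e] = Some y -> incident e y.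
Proof.
rewrite /= /incident; case: ifP => [_ [<-]|_]; first by rewrite eqxx orbT.
by case: ifP => // _ [<-]; rewrite eqxx.
Qed.

Lemma walk_end1_other_end e y :
  incident e y -> walk_end src tgt y [:: e] = Some (other_end e y).
Proof. by rewrite /incident /other_end /=; case: ifP => //= _ ->. Qed.

Lemma other_endP e y : incident e y -> incident e (other_end e y).
Proof. by rewrite /incident /other_end; case: ifP; rewrite eqxx ?orbT. Qed.

Lemma incident_endpoints e x y : x != y -> incident e x -> incident e y ->
  (src e = x /\ tgt e = y) \/ (src e = y /\ tgt e = x).
Proof.
rewrite /incident => x_neq_y /orP[]/eqP ex /orP[]/eqP ey; subst x y.
all: by [left | right | rewrite eqxx in x_neq_y].
Qed.

Hypothesis acyc : acyclic src tgt.

Lemma src_neq_tgt e : src e != tgt e.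
Proof.
apply/eqP => loop_e.
by apply: (acyc (x := tgt e) (es := [:: e])) => //=; rewrite loop_e eqxx.
Qed.

Lemma other_end_neq e y : incident e y -> other_end e y != y.
Proof.
rewrite /incident /other_end; have := src_neq_tgt e.
by case: ifP => [/eqP <- src_tgt _|_ src_tgt /= /eqP <-] //; rewrite eq_sym.
Qed.

(* A trail whose first arrow meets its end point closes up into a cycle. *)
Lemma trail_end_not_incident_first x e es y :
  walk_end src tgt x (e :: es) = Some y -> uniq (e :: es) -> es != [::] ->
  ~~ incident e y.
Proof.
move=> walk_y uniq_ees es_neq_nil; apply/negP => inc_e.
have [x_eq_y|x_neq_y] := eqVneq x y.
  by rewrite x_eq_y in walk_y; apply: (acyc _ uniq_ees walk_y).
case/andP: uniq_ees => _ uniq_es; move: walk_y inc_e; rewrite /= /incident.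
case: ifP => [/eqP -> walk_tgt|_].
  rewrite (negbTE x_neq_y) => /eqP tgt_y; rewrite tgt_y in walk_tgt.
  exact: (acyc es_neq_nil uniq_es walk_tgt).
case: ifP => // /eqP -> walk_src; rewrite (negbTE x_neq_y) orbF => /eqP src_y.
by rewrite src_y in walk_src; apply: (acyc es_neq_nil uniq_es walk_src).
Qed.

Definition has_trail (F : {set E}) k := exists x es y,
  [/\ size es = k, uniq es, all [in F] es & walk_end src tgt x es = Some y].

Definition has_leaf (F : {set E}) := exists y e,
  [/\ e \in F, incident e y & forall e', e' \in F -> incident e' y -> e' = e].

Lemma trail_extend F k : has_trail F k.+1 -> has_leaf F \/ has_trail F k.+2.
Proof.
case=> x [+ [y [+ + + +]]]; case/lastP => [//|es e] size_es uniq_es in_F walk_y.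
have inc_e : incident e y.
  move: walk_y; rewrite -cats1 walk_end_cat.
  by case: (walk_end src tgt x es) => //= z /walk_end1_incident.
have e_F : e \in F by move: in_F; rewrite all_rcons => /andP[].
have [/existsP[e' /and3P[e'_F inc_e' e'_neq_e]]|/existsPn unique_e] :=
  boolP [exists e', [&& e' \in F, incident e' y & e' != e]]; last first.
  left; exists y, e; split=> // e' e'_F inc_e'.
  by apply/eqP; move: (unique_e e'); rewrite e'_F inc_e' negbK.
have e'_new : e' \notin es.
  apply/negP => e'_es; move: uniq_es walk_y; case/splitPr: e'_es => p1 p2.
  rewrite !rcons_cat rcons_cons cat_uniq walk_end_cat => /and3P[_ _ uniq_p2].
  case: (walk_end src tgt x p1) => //= w walk_y.
  apply/negP: inc_e'; apply: (trail_end_not_incident_first walk_y uniq_p2).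
  by case: p2 {walk_y uniq_p2}.
right; exists x, (rcons (rcons es e) e'), (other_end e' y); split.
- by rewrite size_rcons size_es.
- by rewrite rcons_uniq uniq_es mem_rcons in_cons negb_or e'_neq_e e'_new.
- by rewrite all_rcons e'_F in_F.
- by rewrite -cats1 walk_end_cat walk_y; apply: walk_end1_other_end.
Qed.

Lemma trail_size_le F k : has_trail F k -> k <= #|F|.
Proof.
case=> x [es [y [<- uniq_es in_F _]]]; rewrite cardE.
by apply: uniq_leq_size => // e /(allP in_F); rewrite mem_enum.
Qed.

Lemma nonempty_has_leaf F : F != set0 -> has_leaf F.
Proof.
case/set0Pn=> e e_F.
suff /(_ #|F|)[//|/trail_size_le] : forall k, has_leaf F \/ has_trail F k.+1.
  by rewrite ltnn.
elim=> [|k [|/trail_extend]] //; [right | by left].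
by exists (src e), [:: e], (tgt e); split; rewrite //= ?e_F ?eqxx.
Qed.

(* Induction on [A]: delete a leaf of [F] together with its only arrow. *)
Lemma card_forest_lt (A : {set V}) (F : {set E}) : A != set0 ->
  (forall e, e \in F -> (src e \in A) && (tgt e \in A)) -> #|F| < #|A|.
Proof.
have [n] := ubnP #|A|; elim: n A F => // n IH A F card_A A_neq0 F_A.
have [->|F_neq0] := eqVneq F set0; first by rewrite cards0 card_gt0.
have [y [e [e_F inc_e leaf_e]]] := nonempty_has_leaf F_neq0.
have incident_A v : incident e v -> v \in A.
  by rewrite /incident => /orP[]/eqP <-; case/andP: (F_A e e_F).
rewrite (cardsD1 e F) (cardsD1 y A) e_F incident_A //= !add1n ltnS.
apply: IH; first by rewrite (cardsD1 y A) incident_A in card_A.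
  apply/set0Pn; exists (other_end e y).
  by rewrite !inE other_end_neq // incident_A // other_endP.
move=> e'; rewrite !inE => /andP[e'_neq_e e'_F].
have : ~~ incident e' y by apply: contra e'_neq_e => /(leaf_e _ e'_F) ->.
by rewrite /incident negb_or => /andP[-> ->]; apply: F_A.
Qed.

Lemma card_arrows_lt : 0 < #|V| -> #|E| < #|V|.
Proof.
rewrite -!cardsT card_gt0 => V_neq0.
by apply: card_forest_lt => // e _; rewrite !inE.
Qed.

End Forest.

Lemma card_eq2 (T : finType) (x y : T) :
  x != y -> (forall v, v = x \/ v = y) -> #|T| = 2.
Proof.
move=> x_neq_y xy; rewrite -cardsT (_ : [set: T] = [set x; y]) ?cards2 ?x_neq_y //.
by apply/setP => v; rewrite !inE; case: (xy v) => ->; rewrite eqxx ?orbT.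
Qed.

Section Tree.
Variables (V E : finType) (src tgt : E -> V).
Hypothesis tree : is_dtree src tgt.

Lemma exists_incident_arrow x y : x != y -> exists e, incident src tgt e x.
Proof.
case: tree => _ [conn _] x_neq_y; case/connectP: (conn x y) => -[|z p] /=.
  by move=> _ x_eq_y; rewrite x_eq_y eqxx in x_neq_y.
case/andP=> /existsP[e adj_e] _ _; exists e; rewrite /incident.
by case/orP: adj_e => /andP[/eqP -> /eqP ->]; rewrite eqxx ?orbT.
Qed.

Lemma card_tree2 : #|V| = 2 -> exists e,
  [/\ src e != tgt e, forall e', e' = e & forall v, v = src e \/ v = tgt e].
Proof.
case: tree => V_gt0 [_ acyc] card_V.
have [x [y [_ _ x_neq_y]]] : exists x y, [/\ x \in V, y \in V & x != y].
  by apply/card_gt1P; rewrite card_V.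
have [e _] := exists_incident_arrow x_neq_y.
have src_tgt := src_neq_tgt acyc e.
exists e; split=> // [e'|v].
  have : #|E| <= 1 by rewrite -ltnS -card_V (card_arrows_lt acyc).
  by move/card_le1_eqP; apply.
have ends_e : [set src e; tgt e] = [set: V].
  by apply/eqP; rewrite eqEcard subsetT cards2 src_tgt cardsT card_V.
have : v \in [set src e; tgt e] by rewrite ends_e inE.
by rewrite !inE => /orP[]/eqP; [left | right].
Qed.

End Tree.

Section AbstractPath.
Variables (V E : finType) (src tgt : E -> V) (tau : V -> aedge) (sigma : E -> vtype).
Hypothesis path : is_abstract_path src tgt tau sigma.

Lemma abstract_path_tree : is_dtree src tgt.
Proof. by case: path. Qed.

Lemma path_card_arrows_lt : #|E| < #|V|.
Proof. by case: abstract_path_tree => V_gt0 [_ acyc]; apply: (card_arrows_lt acyc). Qed.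

Lemma arrow_tgt_type e X : X1 X (tau (tgt e)) = 0 -> sigma e != X.
Proof.
case: path => _ _ in_bound _ X1_0; apply/eqP => sigma_e.
move: (in_bound (tgt e) X); rewrite X1_0 leqn0 cards_eq0 => /eqP/setP/(_ e).
by rewrite !inE sigma_e !eqxx.
Qed.

Lemma arrow_src_type e X : X2 X (tau (src e)) = 0 -> sigma e != X.
Proof.
case: path => _ _ _ out_bound X2_0; apply/eqP => sigma_e.
move: (out_bound (src e) X); rewrite X2_0 leqn0 cards_eq0 => /eqP/setP/(_ e).
by rewrite !inE sigma_e !eqxx.
Qed.

Lemma interior_s1_u2 v :
  ~~ ae_mu (tau v) -> ae_s1 (tau v) = 0 /\ ae_u2 (tau v) = 0.
Proof.
case: path => _ edge_v _ _ interior_v; move: (edge_v v).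
by rewrite /is_aedge (negbTE interior_v) => /andP[/eqP -> /eqP ->].
Qed.

Lemma boundary_o1_o2 v : ae_mu (tau v) -> ae_o1 (tau v) = 0 /\ ae_o2 (tau v) = 0.
Proof.
case: path => _ edge_v _ _ boundary_v; move: (edge_v v).
by rewrite /is_aedge boundary_v => /andP[/eqP -> /eqP ->].
Qed.

Lemma us_arrow_boundary e :
  sigma e != tO -> exists2 v, ae_mu (tau v) & incident src tgt e v.
Proof.
case sigma_e: (sigma e) => [//||] _.
- exists (src e); last by rewrite /incident eqxx.
  apply: contraT => /interior_s1_u2[_ u2_0].
  by have := arrow_src_type (X := tU) u2_0; rewrite sigma_e eqxx.
- exists (tgt e); last by rewrite /incident eqxx orbT.
  apply: contraT => /interior_s1_u2[s1_0 _].
  by have := arrow_tgt_type (X := tS) s1_0; rewrite sigma_e eqxx.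
Qed.

Lemma boundary_arrow_not_interior e v :
  ae_mu (tau v) -> incident src tgt e v -> sigma e != tO.
Proof.
move=> /boundary_o1_o2[o1_0 o2_0] /orP[]/eqP ends_e.
  by apply: arrow_src_type; rewrite ends_e.
by apply: arrow_tgt_type; rewrite ends_e.
Qed.

Definition boundary_nodes := [set v | ae_mu (tau v)].

Definition us_arrows := [set e | sigma e != tO].

Lemma card_us_arrows_le : #|us_arrows| <= #|E|.
Proof. exact: max_card. Qed.

Lemma card_us_arrows_lt : #|us_arrows| < #|V|.
Proof. exact: leq_ltn_trans card_us_arrows_le path_card_arrows_lt. Qed.

Lemma boundary_nodes_eq0 : boundary_nodes = set0 <-> forall v, ~~ ae_mu (tau v).
Proof.
split=> [no_boundary v | interior].
  by move/setP/(_ v): no_boundary; rewrite !inE => ->.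
by apply/setP => v; rewrite !inE; apply/negbTE.
Qed.

Lemma card_us_arrows :
  #|us_arrows| = #|[set e | sigma e == tS]| + #|[set e | sigma e == tU]|.
Proof.
rewrite -cardsUI (_ : _ :&: _ = set0) ?cards0 ?addn0.
  by apply: eq_card => e; rewrite !inE; case: (sigma e).
by apply/setP => e; rewrite !inE; case: (sigma e).
Qed.

Lemma weight_legal : is_legal tau sigma ->
  path_weight tau = ((#|V| + #|boundary_nodes|)%N%:Z - #|us_arrows|%:Z)%R.
Proof.
case=> /subr0_eq sum_s1 /subr0_eq sum_u2.
have Posz_sum (F : V -> nat) : ((\sum_v F v)%N%:Z = \sum_v (F v)%:Z)%R.
  exact: (big_morph _ PoszD (erefl _)).
have node_weight v : aedge_weight (tau v) =
    ((1 + ae_mu (tau v))%N%:Z - (ae_s1 (tau v))%:Z - (ae_u2 (tau v))%:Z)%R.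
  rewrite /aedge_weight; case: (boolP (ae_mu (tau v))) => [//|/interior_s1_u2[-> ->]].
  by rewrite !subr0.
have sum_nodes : (\sum_v (1 + ae_mu (tau v)))%N = #|V| + #|boundary_nodes|.
  rewrite big_split /= sum1_card; congr (_ + _).
  rewrite -sum1_card [RHS]big_mkcond /=.
  by apply: eq_bigr => v _; rewrite inE; case: (ae_mu _).
rewrite /path_weight (eq_bigr _ (fun v _ => node_weight v)) !sumrB.
by rewrite sum_s1 sum_u2 -Posz_sum sum_nodes card_us_arrows -addrA -opprD -PoszD.
Qed.

Lemma us_arrows_interior : (forall v, ~~ ae_mu (tau v)) -> us_arrows = set0.
Proof.
move=> interior; apply/setP => e; rewrite !inE; apply/negbTE/negP.
by case/us_arrow_boundary => v; rewrite (negbTE (interior v)).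
Qed.

Lemma us_arrow_incident v e :
  boundary_nodes = [set v] -> e \in us_arrows -> incident src tgt e v.
Proof.
move=> boundary_v; rewrite inE => /us_arrow_boundary[w boundary_w inc_w].
have : w \in boundary_nodes by rewrite inE.
by rewrite boundary_v inE => /eqP <-.
Qed.

Lemma formIa_of_interior :
  (forall v, ~~ ae_mu (tau v)) -> #|V| = 2 -> formIa src tgt tau.
Proof.
move=> interior /(card_tree2 abstract_path_tree)[e [src_tgt unique_e ends_e]].
by exists (src e), (tgt e), e; split; rewrite ?interior.
Qed.

Lemma formIb_of_one_boundary v :
  boundary_nodes = [set v] -> us_arrows = [set: E] -> formIb src tgt tau.
Proof.
move=> boundary_v us_all.
have boundary_nodesP w : ae_mu (tau w) = (w == v).
  by rewrite -in_set1 -boundary_v inE.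
exists v; split=> [|w w_neq_v]; first by rewrite boundary_nodesP.
split; first by rewrite boundary_nodesP.
have [e inc_w] := exists_incident_arrow abstract_path_tree w_neq_v.
have inc_v : incident src tgt e v by rewrite (us_arrow_incident boundary_v) ?us_all.
by exists e; apply: incident_endpoints; rewrite // eq_sym.
Qed.

Lemma formI_of_weight2 : is_legal tau sigma -> path_weight tau = Posz 2 ->
  formIa src tgt tau \/ formIb src tgt tau.
Proof.
move=> legal; rewrite weight_legal // => /eqP; rewrite subr_eq -PoszD => /eqP[card_eq].
(* [set] identifies two syntactically different elaborations of [#|V|] for [lia]. *)
have us_lt := card_us_arrows_lt; set nV := #|V| in card_eq us_lt.
have : #|boundary_nodes| <= 1 by lia.
rewrite leq_eqVlt ltnS leqn0 => /orP[/cards1P[v boundary_v]|/eqP/cards0_eq no_boundary].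
  right; apply: (formIb_of_one_boundary boundary_v).
  apply/eqP; rewrite eqEcard subsetT cardsT.
  have := path_card_arrows_lt; move: card_eq; rewrite boundary_v cards1; lia.
have interior := boundary_nodes_eq0.1 no_boundary.
left; apply: formIa_of_interior => //.
by move: card_eq; rewrite no_boundary us_arrows_interior // !cards0; lia.
Qed.

Lemma weight_formIa : is_legal tau sigma -> formIa src tgt tau -> path_weight tau = Posz 2.
Proof.
move=> legal [x [y [e [x_neq_y xy _ _ [interior_x interior_y]]]]].
have interior v : ~~ ae_mu (tau v) by case: (xy v) => ->.
rewrite weight_legal // us_arrows_interior // (boundary_nodes_eq0.2 interior).
by rewrite (card_eq2 x_neq_y xy) !cards0.
Qed.

(* The nodes other than [v] are the far ends of the [u]/[s]-arrows at [v]. *)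
Lemma weight_formIb : is_legal tau sigma -> formIb src tgt tau -> path_weight tau = Posz 2.
Proof.
move=> legal [v [boundary_v adjacent_v]].
have boundary_nodes1 : boundary_nodes = [set v].
  apply/setP => w; rewrite !inE; have [->//|w_neq_v] := eqVneq w v.
  by case: (adjacent_v w w_neq_v) => /negbTE.
have cover : [set~ v] \subset (other_end src tgt ^~ v) @: us_arrows.
  apply/subsetP => w; rewrite in_setC1 => w_neq_v.
  have [_ [e ends_e]] := adjacent_v w w_neq_v.
  have inc_v : incident src tgt e v.
    by rewrite /incident; case: ends_e => -[-> ->]; rewrite eqxx ?orbT.
  apply/imsetP; exists e; first by rewrite inE (boundary_arrow_not_interior boundary_v).
  by rewrite /other_end; case: ends_e => -[-> ->]; rewrite ?eqxx ?(negbTE w_neq_v).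
have := subset_leq_card cover; have := leq_imset_card (other_end src tgt ^~ v) us_arrows.
have := path_card_arrows_lt; have := card_us_arrows_le.
rewrite cardsC1 weight_legal // boundary_nodes1 cards1; lia.
Qed.

Lemma length2_formII : is_boundary_path tau ->
  (path_length V = 2 <-> formII src tgt tau).
Proof.
move=> boundary; split=> [/(card_tree2 abstract_path_tree)[e [src_tgt unique_e ends_e]]|].
  by exists (src e), (tgt e), e; split=> //; split; apply: boundary.
by case=> x [y [e [x_neq_y xy _ _ _]]]; apply: card_eq2 x_neq_y xy.
Qed.

End AbstractPath.

Theorem corollary3p11 :
  (forall (V E : finType) (src tgt : E -> V) (tau : V -> aedge) (sigma : E -> vtype),
      is_abstract_path src tgt tau sigma ->
      is_legal tau sigma ->
      (path_weight tau = Posz 2 <-> formIa src tgt tau \/ formIb src tgt tau)) /\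
  (forall (V E : finType) (src tgt : E -> V) (tau : V -> aedge) (sigma : E -> vtype),
      is_abstract_path src tgt tau sigma ->
      is_boundary_path tau ->
      (path_length V = 2 <-> formII src tgt tau)).
Proof.
split=> V E src tgt tau sigma path; last exact: length2_formII path.
move=> legal; split; first exact: formI_of_weight2 path legal.
by case; [apply: weight_formIa path legal | apply: weight_formIb path legal].
Qed.
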